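(* The following statements are equivalent: (1) Every bridgeless cubic graph has a 4-line Fano-flow. (2) Every bridgeless cubic graph has three 1-factors $M_1,M_2,M_3$ such that $M_1\cap M_2\cap M_3=\emptyset$. (3) Every bridgeless cubic graph has a bipartite core. (4) Every bridgeless cubic graph has a triangle-free core. (5) Every bridgeless cubic graph has three 1-factors such that the complement of their union is an acyclic graph.
   Context: A Fano-flow of a cubic graph $G$ is a map $\phi:E(G)\to\mathbb{Z}_2^3\setminus\{0\}$ such that at each vertex the three incident edges receive pairwise distinct values with sum $0$; equivalently, these values form a line of the Fano plane, whose points are the seven nonzero elements of $\mathbb{Z}_2^3$ and whose lines are the triples $\{a,b,c\}$ of distinct nonzero elements with $a+b+c=0$. A $k$-line Fano-flow is a Fano-flow in which at most $k$ distinct lines occur as the sets of values at the vertices. A 1-factor is a perfect matching. For three 1-factors $M_1,M_2,M_3$ of $G$, let $E_i$ be the set of edges lying in exactly $i$ of them; the core of $G$ with respect to $M_1,M_2,M_3$ is the subgraph $G[E_0\cup E_2\cup E_3]$ induced by these edges. A core is triangle-free if it contains no circuit of length $3$. The complement of the union of $M_1,M_2,M_3$ is the subgraph $G[E_0]$ induced by the edges in none of them. *)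

(* Cubic graphs are finite multigraphs given by a vertex
   type V, an edge type E and an end-map g : E -> V * V (edges unoriented). *)
From mathcomp Require Import all_boot all_order all_algebra.
Set Implicit Arguments. Unset Strict Implicit. Unset Printing Implicit Defensive.
Import GRing.Theory.

Section Graphs.
Variables (V E : finType) (g : E -> V * V).

Definition joins (e : E) (x y : V) : bool := (g e == (x, y)) || (g e == (y, x)).

Definition inc (v : V) : {set E} := [set e | ((g e).1 == v) || ((g e).2 == v)].

Definition loopless : Prop := forall e, (g e).1 != (g e).2.

Definition cubic : Prop := loopless /\ forall v, #|inc v| = 3.

Definition adjF (F : {set E}) : rel V := fun x y => [exists e in F, joins e x y].

Definition bridge (e : E) : Prop := ~~ connect (adjF (~: [set e])) (g e).1 (g e).2.

Definition bridgeless : Prop := forall e, ~ bridge e.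

Definition Z23 := 'rV['F_2]_3.

Definition fano_flow (phi : E -> Z23) : Prop :=
  (forall e, phi e != 0%R) /\
  (forall v, (forall e f, e \in inc v -> f \in inc v -> e != f -> phi e != phi f)
             /\ (\sum_(e in inc v) phi e)%R = 0%R).

Definition line_at (phi : E -> Z23) (v : V) : {set Z23} := [set phi e | e in inc v].

Definition k_line_fano_flow (k : nat) (phi : E -> Z23) : Prop :=
  fano_flow phi /\ #|[set line_at phi v | v in V]| <= k.

Definition one_factor (M : {set E}) : Prop := forall v, #|inc v :&: M| = 1.

Definition mult3 (M1 M2 M3 : {set E}) (e : E) : nat :=
  (e \in M1) + (e \in M2) + (e \in M3).

Definition core (M1 M2 M3 : {set E}) : {set E} := [set e | mult3 M1 M2 M3 e != 1].
Definition E0 (M1 M2 M3 : {set E}) : {set E} := [set e | mult3 M1 M2 M3 e == 0].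

(* a circuit in the subgraph with edge set F: distinct vertices v_0..v_{k-1}
   (k >= 2) and distinct edges e_0..e_{k-1} of F, e_i joining v_i and v_{i+1 mod k} *)
Definition circuit (F : {set E}) (vs : seq V) (es : seq E) : Prop :=
  [/\ 2 <= size vs, size es = size vs, uniq vs & uniq es] /\
  [/\ all (fun e => e \in F) es &
      all (fun p => joins p.1 p.2.1 p.2.2) (zip es (zip vs (rot 1 vs)))].

Definition acyclic (F : {set E}) : Prop := forall vs es, ~ circuit F vs es.

Definition triangle_free (F : {set E}) : Prop :=
  forall vs es, size vs = 3 -> ~ circuit F vs es.

Definition bipartite (F : {set E}) : Prop :=
  exists c : V -> bool, forall e, e \in F -> c (g e).1 != c (g e).2.

End Graphs.

Definition stmt1 : Prop := forall (V E : finType) (g : E -> V * V),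
  cubic g -> bridgeless g -> exists phi : E -> Z23, k_line_fano_flow g 4 phi.
Definition stmt2 : Prop := forall (V E : finType) (g : E -> V * V),
  cubic g -> bridgeless g -> exists M1 M2 M3 : {set E},
  [/\ one_factor g M1, one_factor g M2, one_factor g M3 & M1 :&: M2 :&: M3 = set0].
Definition stmt3 : Prop := forall (V E : finType) (g : E -> V * V),
  cubic g -> bridgeless g -> exists M1 M2 M3 : {set E},
  [/\ one_factor g M1, one_factor g M2, one_factor g M3 & bipartite g (core M1 M2 M3)].
Definition stmt4 : Prop := forall (V E : finType) (g : E -> V * V),
  cubic g -> bridgeless g -> exists M1 M2 M3 : {set E},
  [/\ one_factor g M1, one_factor g M2, one_factor g M3 & triangle_free g (core M1 M2 M3)].
Definition stmt5 : Prop := forall (V E : finType) (g : E -> V * V),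
  cubic g -> bridgeless g -> exists M1 M2 M3 : {set E},
  [/\ one_factor g M1, one_factor g M2, one_factor g M3 & acyclic g (E0 M1 M2 M3)].

From mathcomp Require Import all_boot all_order all_algebra zify.
Set Implicit Arguments. Unset Strict Implicit. Unset Printing Implicit Defensive.
Import GRing.Theory.

(* Statement (2) is the hub.  If three 1-factors have no common edge, the
   multiplicities of the three edges at a vertex are 1,1,1 or 0,1,2, so E_0 and
   E_2 are matchings covering the same vertices.  Hence the core is a disjoint
   union of E_0/E_2-alternating circuits: it is bipartite (3), a fortiori
   triangle-free (4), and a circuit in E_0 would need two E_0-edges at one
   vertex (5).  Labelling every edge by the indicator vector of the 1-factors
   avoiding it is a Fano-flow whose lines are among {1 + d_k | k < 3} and the
   three lines {1, d_k, 1 + d_k}, where 1 is the all-one vector and d_k the k-th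
   unit vector (1).  Conversely, any four lines of the Fano plane have three
   transversal point sets with no common point (a finite check), and their
   preimages under a 4-line Fano-flow are 1-factors with no common edge.
   Finally (4) and (5) imply (2) after replacing every edge by a copy of K_4
   minus an edge: an edge lying in all three projections of 1-factors of the
   new graph forces a triangle of core edges and a 4-circuit of E_0-edges
   inside its gadget. *)

Lemma card_setI_sum (T : finType) (A B : {set T}) :
  #|A :&: B| = \sum_(x in A) (x \in B).
Proof. by rewrite -big_mkcondr /= sum1dep_card; apply: eq_card => x; rewrite !inE. Qed.

Lemma card3_extend (T : finType) (A : {set T}) x y :
  #|A| = 3 -> x \in A -> y \in A -> x != y ->
  exists z, [/\ x != z, y != z & A = [set x; y; z]].
Proof.
move=> A3 xA yA xy.
have xyA : [set x; y] \subset A by rewrite subUset !sub1set xA yA.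
have /cards1P [z Az] : #|A :\: [set x; y]| == 1.
  by rewrite cardsD (setIidPr xyA) A3 cards2 xy.
have : z \in A :\: [set x; y] by rewrite Az set11.
rewrite !inE negb_or => /andP [/andP [zx zy] zA].
exists z; split; rewrite 1?eq_sym //; apply/setP => w.
by rewrite -(setID A [set x; y]) (setIidPr xyA) Az !inE.
Qed.

Lemma big_set3 (R : Type) (idx : R) (op : Monoid.com_law idx) (T : finType)
    (x y z : T) (F : T -> R) : x != y -> x != z -> y != z ->
  \big[op/idx]_(i in [set x; y; z]) F i = op (F x) (op (F y) (F z)).
Proof.
move=> xy xz yz; rewrite -setUA big_setU1 ?big_setU1 ?big_set1 // !inE.
  by rewrite (negbTE yz).
by rewrite negb_or xy xz.
Qed.

Lemma cards3 (T : finType) (x y z : T) : x != y -> x != z -> y != z -> #|[set x; y; z]| = 3.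
Proof. by move=> xy xz yz; rewrite -(setIT [set x; y; z]) card_setI_sum big_set3 // !inE. Qed.

Lemma connect_homo (T T' : finType) (e : rel T) (e' : rel T') (h : T -> T') :
  (forall x y, e x y -> connect e' (h x) (h y)) ->
  forall x y, connect e x y -> connect e' (h x) (h y).
Proof.
move=> he x y /connectP [s]; elim: s x => [|z s IH] x /= => [_ -> // | /andP [xz zs] ys].
exact: connect_trans (he _ _ xz) (IH _ zs ys).
Qed.

Section Graph.
Variables (V E : finType) (g : E -> V * V).

Lemma joins_inc e x y : joins g e x y -> (e \in inc g x) && (e \in inc g y).
Proof. by rewrite /joins /inc !inE; case/orP => /eqP ->; rewrite !eqxx ?orbT. Qed.

Lemma circuit_nth F vs es x0 e0 i : circuit g F vs es -> i < size vs ->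
  joins g (nth e0 es i) (nth x0 vs i) (nth x0 (rot 1 vs) i).
Proof.
case=> [[_ s_es _ _] [_ /(all_nthP (e0, (x0, x0))) ok]] lt_i.
have s_rot : size (zip vs (rot 1 vs)) = size vs by rewrite size_zip size_rot minnn.
have := ok i; rewrite size_zip s_rot s_es minnn !nth_zip ?s_rot ?size_rot //=.
by apply.
Qed.

Lemma circuit_sub F vs es : circuit g F vs es -> {subset es <= F}.
Proof. by case=> _ [/allP]. Qed.

Lemma circuit_head F v vs es : circuit g F (v :: vs) es ->
  exists e f, [/\ e \in es, f \in es, e != f, e \in inc g v & f \in inc g v].
Proof.
move=> C; have [[lt1 s_es _ uniq_es] _] := C.
case: vs es lt1 s_es uniq_es C => [|w vs] // [|e es] // _ [s_es] uniq_es C.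
have := circuit_nth v e C (ltn0Sn _); have := circuit_nth v e C (ltnSn _).
rewrite rot1_cons nth_rcons [size (w :: _)]/= ltnn eqxx [nth _ (e :: _) _]/=.
move=> /joins_inc/andP [_ fv] /joins_inc/andP [ev _].
have f_es : nth e es (size vs) \in es by rewrite mem_nth // s_es.
exists e, (nth e es (size vs)); split => //; rewrite ?mem_head ?in_cons ?f_es ?orbT //.
by case/andP: uniq_es => e_es _; apply: contraNneq e_es => ->.
Qed.

Lemma adjF_sym (F : {set E}) : connect_sym (adjF g F).
Proof.
apply: sym_connect_sym => x y; apply/existsP/existsP => -[f /andP [fF j]];
  by exists f; rewrite fF /joins orbC.
Qed.

Lemma connect_edge (F : {set E}) e :
  e \in F -> connect (adjF g F) (g e).1 (g e).2.
Proof.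
by move=> eF; apply: connect1; apply/existsP; exists e; rewrite eF /joins -surjective_pairing eqxx.
Qed.
End Graph.

Lemma bipartite_triangle_free (V E : finType) (g : E -> V * V) F :
  bipartite g F -> triangle_free g F.
Proof.
case=> c cF [|a [|b [|d []]]] // es _ C; have [[_ s_es _ _] _] := C.
case: es s_es C => [|e0 es] // s_es C.
have step i : i < 3 -> c (nth a [:: a; b; d] i) != c (nth a [:: b; d; a] i).
  move=> lt_i; have /cF : nth e0 (e0 :: es) i \in F.
    by apply: (circuit_sub C); rewrite mem_nth // s_es.
  have := circuit_nth a e0 C lt_i; rewrite /joins.
  by case/orP => /eqP ->; rewrite // eq_sym.
by have := step 0 isT; have := step 1 isT; have := step 2 isT; do 3!case: (c _).
Qed.

Section Mate.
Variables (V E : finType) (g : E -> V * V) (F : {set E}).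
Hypothesis g_loopless : loopless g.
Hypothesis F_matching : forall v, #|inc g v :&: F| <= 1.

Definition other_end (v : V) (e : E) : V := if (g e).1 == v then (g e).2 else (g e).1.

Definition mate (v : V) : V :=
  if [pick e in inc g v :&: F] is Some e then other_end v e else v.

Lemma other_endK v e : e \in inc g v ->
  [/\ e \in inc g (other_end v e), other_end (other_end v e) e = v & other_end v e != v].
Proof.
have ge := g_loopless e; rewrite /other_end inE.
case: ((g e).1 =P v) => [<- _ | _ /= /eqP <-].
  by rewrite inE eqxx orbT (negbTE ge) eq_sym ge.
by rewrite inE !eqxx.
Qed.

Lemma mate_edge v e : e \in inc g v :&: F -> mate v = other_end v e.
Proof.
move=> evF; rewrite /mate; case: pickP => [f fvF | /(_ e)]; last by rewrite evF.
by congr other_end; apply: (card_le1_eqP (F_matching v)).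
Qed.

Lemma mate_unmatched v : inc g v :&: F = set0 -> mate v = v.
Proof. by move=> vF; rewrite /mate; case: pickP => // e; rewrite vF inE. Qed.

Lemma mate_eq v : (mate v == v) = (inc g v :&: F == set0).
Proof.
case: (set_0Vmem (inc g v :&: F)) => [vF | [e evF]].
  by rewrite (mate_unmatched vF) vF !eqxx.
have [_ _ ov] := other_endK (setIP evF).1.
by rewrite (mate_edge evF) (negbTE ov); apply/esym/set0Pn; exists e.
Qed.

Lemma mateK : involutive mate.
Proof.
move=> v; case: (set_0Vmem (inc g v :&: F)) => [vF | [e evF]]; first by rewrite !mate_unmatched.
have [ev eF] := setIP evF; have [ew back _] := other_endK ev.
have ewF : e \in inc g (other_end v e) :&: F by rewrite in_setI ew eF.
by rewrite (mate_edge evF) (mate_edge ewF) back.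
Qed.

Lemma mate_ends e : e \in F -> mate (g e).1 = (g e).2.
Proof.
move=> eF; have evF : e \in inc g (g e).1 :&: F by rewrite in_setI inE eqxx eF.
by rewrite (mate_edge evF) /other_end eqxx.
Qed.
End Mate.

Section TwoInvolutions.
Variables (T : finType) (s t : T -> T).
Hypotheses (sK : involutive s) (tK : involutive t).
Hypothesis st_fixed : forall x, (s x == x) = (t x == x).

Local Notation rho := (t \o s).
Local Notation rho' := (s \o t).

Lemma rhoK : cancel rho rho'.
Proof. by move=> x /=; rewrite tK sK. Qed.

Lemma s_iter_rho n x : s (iter n rho x) = iter n rho' (s x).
Proof. by elim: n => //= n <-. Qed.

Lemma iter_rhoK n x : iter n rho' (iter n rho x) = x.
Proof. by elim: n x => // n IH x; rewrite iterSr iterS rhoK. Qed.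

Lemma moved_rho x : s x != x -> s (rho x) != rho x.
Proof. by move=> sx /=; rewrite st_fixed tK eq_sym -st_fixed sK eq_sym. Qed.

Lemma moved_iter_rho n x : s x != x -> s (iter n rho x) != iter n rho x.
Proof. by move=> sx; elim: n => //= n; apply: moved_rho. Qed.

(* [s] conjugates [rho] to its inverse, so [s x = rho^k x] would make
   [rho^(k/2) x] a fixed point of [s] or of [t]. *)
Lemma not_fconnect_rho_s x : s x != x -> ~~ fconnect rho x (s x).
Proof.
move=> sx; apply/negP => /iter_findex; set k := findex _ _ _ => k_s.
set j := k./2; have kE : k = j + odd k + j.
  by rewrite -{1}(odd_double_half k) -addnn addnA [odd k + _]addnC.
have := s_iter_rho j x; have := moved_iter_rho j sx.
set u := iter j rho x; rewrite -k_s kE !iterD -/u iter_rhoK.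
case: (odd k) => /= su su_t; last by rewrite su_t eqxx in su.
have : t (s u) == s u by rewrite -su_t.
by rewrite -st_fixed sK eq_sym (negbTE su).
Qed.

Lemma involutions_bicoloring : exists c : T -> bool,
  (forall x, s x != x -> c (s x) != c x) /\ (forall x, t x != x -> c (t x) != c x).
Proof.
have rho_sym : connect_sym (frel rho) := fconnect_sym (can_inj rhoK).
pose r x : nat := enum_rank (froot rho x).
have r_rho x : r (rho x) = r x.
  by rewrite /r; move/(fingraph.rootP rho_sym): (fconnect1 rho x) => ->.
have r_s x : s x != x -> r x != r (s x).
  move=> sx; apply: contraNneq (not_fconnect_rho_s sx).
  by move=> /val_inj/enum_rank_inj/(fingraph.rootP rho_sym).
have lt_swap a b : a != b -> (b < a) != (a < b) by case: ltngtP.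
exists (fun x => r x < r (s x)); split => x sx; first by rewrite sK lt_swap // r_s.
have sx' : s x != x by rewrite st_fixed.
have -> : r (s (t x)) = r x by rewrite -r_rho /= sK tK.
have -> : r (t x) = r (s x) by rewrite -[r (s x)]r_rho /= sK.
by rewrite lt_swap // r_s.
Qed.
End TwoInvolutions.

Section FanoFlow.
Local Open Scope ring_scope.

Lemma pchar_F2 : (2 \in [pchar 'F_2])%N.
Proof. exact: pchar_Fp. Qed.

Lemma Z23_addxx (x : Z23) : x + x = 0.
Proof. by apply/rowP => i; rewrite !mxE addrr_pchar2 // pchar_F2. Qed.

Lemma natr_F2_inj (a b : bool) : (a%:R : 'F_2) = b%:R -> a = b.
Proof. by case: a; case: b => // /eqP; rewrite ?oner_eq0 // eq_sym oner_eq0. Qed.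

Variables (V E : finType) (g : E -> V * V) (phi : E -> Z23).
Hypotheses (g_cubic : cubic g) (phi_flow : fano_flow g phi).

Lemma fano_flow_inj v : {in inc g v &, injective phi}.
Proof. by move=> e f ev fv; apply: contra_eq; apply: (proj1 (proj2 phi_flow v)). Qed.

Lemma card_line_at v : #|line_at g phi v| = 3.
Proof. by rewrite card_in_imset ?(proj2 g_cubic) //; apply: fano_flow_inj. Qed.

Lemma line_atE v e f : e \in inc g v -> f \in inc g v -> e != f ->
  line_at g phi v = [set phi e; phi f; phi e + phi f].
Proof.
move=> ev fv ef; have [h [eh fh vE]] := card3_extend (proj2 g_cubic v) ev fv ef.
have := proj2 (proj2 phi_flow v); rewrite vE big_set3 // => /= sum0.
have hE : phi h = phi e + phi f.
  by rewrite -[phi h]add0r -(Z23_addxx (phi e + phi f)) -!addrA sum0 addr0.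
by rewrite /line_at vE !imsetU !imset_set1 hE.
Qed.
End FanoFlow.

Section ThreeFactors.
Variables (V E : finType) (g : E -> V * V).
Hypothesis g_cubic : cubic g.
Variables M1 M2 M3 : {set E}.
Hypotheses (M1_factor : one_factor g M1) (M2_factor : one_factor g M2).
Hypotheses (M3_factor : one_factor g M3).
Hypothesis M123_disjoint : M1 :&: M2 :&: M3 = set0.

Local Notation m := (mult3 M1 M2 M3).
Local Notation M i := (tnth [tuple M1; M2; M3] i).

Definition E_ (k : nat) : {set E} := [set e | m e == k].

Lemma mult3_le2 e : m e <= 2.
Proof.
have : e \notin M1 :&: M2 :&: M3 by rewrite M123_disjoint inE.
by rewrite /mult3 !inE; do 3!case: (e \in _).
Qed.

Lemma mult3E e : m e = \sum_i (e \in M i).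
Proof. by rewrite !big_ord_recl big_ord0 addn0 addnA. Qed.

Lemma M_factor i : one_factor g (M i).
Proof. by case: i => -[|[|[|]]]. Qed.

Lemma card_E_at v :
  #|inc g v :&: E_ 0| + #|inc g v :&: E_ 1| + #|inc g v :&: E_ 2| = 3 /\
  #|inc g v :&: E_ 1| + 2 * #|inc g v :&: E_ 2| = 3.
Proof.
rewrite mul2n -addnn addnA !card_setI_sum -!big_split /=; split.
  rewrite -(proj2 g_cubic v) -sum1_card; apply: eq_bigr => e _.
  by rewrite !inE; case: (m e) (mult3_le2 e) => [|[|[|]]].
have <- : \sum_(e in inc g v) m e = 3.
  by rewrite !big_split /= -!card_setI_sum M1_factor M2_factor M3_factor.
by apply: eq_bigr => e _; rewrite !inE; case: (m e) (mult3_le2 e) => [|[|[|]]].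
Qed.

Lemma E0_matching v : #|inc g v :&: E_ 0| <= 1.
Proof. by have := card_E_at v; lia. Qed.

Lemma E2_matching v : #|inc g v :&: E_ 2| <= 1.
Proof. by have := card_E_at v; lia. Qed.

Lemma core_bipartite : bipartite g (core M1 M2 M3).
Proof.
have g_loopless := proj1 g_cubic.
have fixed02 x : (mate g (E_ 0) x == x) = (mate g (E_ 2) x == x).
  rewrite (mate_eq g_loopless E0_matching) (mate_eq g_loopless E2_matching) -!cards_eq0.
  by have := card_E_at x => -[]; lia.
have [c [c0 c2]] :=
  involutions_bicoloring (mateK g_loopless E0_matching) (mateK g_loopless E2_matching) fixed02.
exists c => e; rewrite inE => m_ne1.
have [e0 | e2] : (e \in E_ 0) \/ (e \in E_ 2).
- by rewrite !inE; case: (m e) (mult3_le2 e) m_ne1 => [|[|[|]]] //; [left | right].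
- rewrite eq_sym -(mate_ends E0_matching e0); apply: c0.
  by rewrite (mate_ends E0_matching e0) eq_sym g_loopless.
- rewrite eq_sym -(mate_ends E2_matching e2); apply: c2.
  by rewrite (mate_ends E2_matching e2) eq_sym g_loopless.
Qed.

Lemma E0_acyclic : acyclic g (E0 M1 M2 M3).
Proof.
move=> [|v vs] es C; first by case: C => -[].
have [e [f [e_es f_es ef ev fv]]] := circuit_head C.
have /card_le1_eqP E0_v := E0_matching v.
by case/eqP: ef; apply: E0_v; rewrite inE ?ev ?fv (circuit_sub C).
Qed.

Local Open Scope ring_scope.

Definition factor_flow (e : E) : Z23 := \row_i (e \notin M i)%:R.

Lemma factor_flowE e i : factor_flow e 0 i = (e \notin M i)%:R.
Proof. by rewrite mxE. Qed.

Lemma factor_flow_E0 e : e \in E_ 0 -> factor_flow e = const_mx 1.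
Proof.
rewrite inE mult3E sum_nat_eq0 => /forallP eM.
by apply/rowP => i; rewrite !mxE; have := eM i; case: (e \in M i).
Qed.

Lemma factor_flow_E1 e : e \in E_ 1 -> exists k, factor_flow e = const_mx 1 + delta_mx 0 k.
Proof.
rewrite inE mult3E => /sum_nat_eq1 [k [_ eMk eM]]; exists k.
apply/rowP => i; rewrite !mxE eqxx /=; case: (eqVneq i k) => [-> | ik].
  by move: eMk; case: (e \in M k) => //= _; rewrite addrr_pchar2 // pchar_F2.
by move/(_ i ik isT): eM; case: (e \in M i) => //; rewrite addr0.
Qed.

Lemma factor_flow_eq_E0 v e f : e \in inc g v -> f \in inc g v -> e != f ->
  factor_flow e = factor_flow f -> e \in E_ 0.
Proof.
move=> ev fv ef /rowP phi_ef.
have ef_M i : (e \in M i) = (f \in M i).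
  by have := phi_ef i; rewrite !factor_flowE => /natr_F2_inj/negb_inj.
rewrite inE mult3E big1 // => i _; apply/eqP; rewrite eqb0; apply/negP => eM.
have /card_le1_eqP/(_ e f) := eq_leq (M_factor i v).
by rewrite !in_setI ev fv -ef_M eM => /(_ isT isT) fe; rewrite fe eqxx in ef.
Qed.

Lemma factor_flow_fano : fano_flow g factor_flow.
Proof.
split=> [e | v].
  apply/negP => /eqP/rowP e0; have := mult3_le2 e.
  rewrite mult3E (eq_bigr (fun=> 1%N)) ?sum_nat_const ?card_ord // => i _.
  by have := e0 i; rewrite !mxE; case: (e \in M i) => // /eqP; rewrite oner_eq0.
split=> [e f ev fv ef | ].
  apply/negP => /eqP phi_ef.
  have eE0 := factor_flow_eq_E0 ev fv ef phi_ef.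
  have fE0 : f \in E_ 0 by apply: factor_flow_eq_E0 fv ev _ (esym phi_ef); rewrite eq_sym.
  have /card_le1_eqP/(_ e f) := E0_matching v.
  by rewrite !in_setI ev fv eE0 fE0 => /(_ isT isT) fe; rewrite fe eqxx in ef.
apply/rowP => i; rewrite summxE mxE.
under eq_bigr => e _ do rewrite factor_flowE -in_setC.
rewrite -natr_sum -card_setI_sum -setDE cardsD (M_factor i v) (proj2 g_cubic v).
by rewrite -(addrr_pchar2 pchar_F2 1).
Qed.

Definition fano_line_of (o : option 'I_3) : {set Z23} :=
  if o is Some k then [set const_mx 1; const_mx 1 + delta_mx 0 k; delta_mx 0 k]
  else [set const_mx 1 + delta_mx 0 k | k : 'I_3].

Lemma line_at_factor_flow v : exists o, line_at g factor_flow v = fano_line_of o.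
Proof.
have [c_sum c_mult] := card_E_at v.
case: (set_0Vmem (inc g v :&: E_ 0)) => [v0 | [f0 f0v]].
  exists None; apply/eqP; rewrite eqEcard card_line_at //; last exact: factor_flow_fano.
  rewrite (leq_trans (leq_imset_card _ _)) ?card_ord // andbT.
  have v1 : inc g v :&: E_ 1 == inc g v.
    by rewrite eqEcard subsetIl (proj2 g_cubic v); move: c_sum c_mult; rewrite v0 cards0; lia.
  apply/subsetP => _ /imsetP [e ev ->].
  have /factor_flow_E1 [k ->] : e \in E_ 1 by move: ev; rewrite -(eqP v1) inE => /andP [].
  exact: imset_f.
have /set0Pn [f1 f1v] : inc g v :&: E_ 1 != set0.
  rewrite -card_gt0; have : (0 < #|inc g v :&: E_ 0|)%N by apply/card_gt0P; exists f0.
  by move: c_sum c_mult; lia.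
move: f0v f1v; rewrite !in_setI => /andP [f0v f0E] /andP [f1v /[dup] f1E /factor_flow_E1 [k f1k]].
have f01 : f0 != f1 by apply: contraTneq f0E => ->; rewrite !inE in f1E *; rewrite (eqP f1E).
exists (Some k); rewrite (line_atE g_cubic factor_flow_fano f0v f1v f01).
by rewrite factor_flow_E0 // f1k addrA Z23_addxx add0r.
Qed.

Lemma factor_flow_4lines : k_line_fano_flow g 4 factor_flow.
Proof.
split; first exact: factor_flow_fano.
apply: (@leq_trans #|[set fano_line_of o | o : option 'I_3]|).
  apply: subset_leq_card; apply/subsetP => _ /imsetP [v _ ->].
  by have [o ->] := line_at_factor_flow v; apply: imset_f.
by rewrite (leq_trans (leq_imset_card _ _)) // card_option card_ord.
Qed.
End ThreeFactors.

Section FanoPlane.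
Local Open Scope ring_scope.

Definition bits := (bool * bool * bool)%type.

Definition bxor (a b : bits) : bits := (a.1.1 (+) b.1.1, a.1.2 (+) b.1.2, a.2 (+) b.2).

Definition bits_of (x : Z23) : bits := (x 0 0 != 0, x 0 1 != 0, x 0 2 != 0).

Lemma F2_eq (a b : 'F_2) : (a != 0) = (b != 0) -> a = b.
Proof. by case: a b => -[|[|a]] ? [[|[|b]] ?] //= _; apply: val_inj. Qed.

Lemma F2_addr_neq0 (a b : 'F_2) : (a + b != 0) = (a != 0) (+) (b != 0).
Proof. by case: a b => -[|[|a]] ? [[|[|b]] ?]. Qed.

Lemma ord3P (i : 'I_3) : [\/ i = 0, i = 1 | i = 2].
Proof.
by case: i => -[|[|[|i]]] // ?; [apply: Or31 | apply: Or32 | apply: Or33]; apply: val_inj.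
Qed.

Lemma bits_of_inj : injective bits_of.
Proof.
move=> x y [x0 x1 x2]; apply/rowP => i; apply: F2_eq.
by case: (ord3P i) => ->.
Qed.

Lemma bits_ofD x y : bits_of (x + y) = bxor (bits_of x) (bits_of y).
Proof. by rewrite /bits_of !mxE !F2_addr_neq0. Qed.

Lemma bits_of0 : bits_of 0 = (false, false, false).
Proof. by rewrite /bits_of !mxE eqxx. Qed.

(* Points of the Fano plane are numbered 1..7 by their binary expansion. *)
Definition bits_of_nat (n : nat) : bits := (odd n./2./2, odd n./2, odd n).

Definition fano_points : seq bits := map bits_of_nat (iota 1 7).

Definition fano_lines : seq (seq bits) := map (map bits_of_nat)
  [:: [:: 1; 2; 3]; [:: 1; 4; 5]; [:: 1; 6; 7]; [:: 2; 4; 6]; [:: 2; 5; 7];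
      [:: 3; 4; 7]; [:: 3; 5; 6]]%N.

Lemma fano_linesP : all (fun a => all (fun b =>
  (a != b) ==> has (fun l => perm_eq l [:: a; b; bxor a b]) fano_lines) fano_points) fano_points.
Proof. by vm_compute. Qed.

Fixpoint sublists (T : Type) (s : seq T) : seq (seq T) :=
  if s is x :: s' then sublists s' ++ map (cons x) (sublists s') else [:: [::]].

Definition meets_once (p l : seq bits) : bool := count (mem p) l == 1%N.

Definition transversals (W : seq (seq bits)) : seq (seq bits) :=
  [seq p <- sublists fano_points | all (meets_once p) W].

Definition disjoint3 (p1 p2 p3 : seq bits) : bool :=
  ~~ has (fun x => (x \in p2) && (x \in p3)) p1.

(* [find] rather than [has]: [vm_compute] would evaluate [has] exhaustively. *)
Definition has_disjoint_transversals (W : seq (seq bits)) : bool :=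
  let T := transversals W in
  (find (fun p1 => find (fun p2 => find (disjoint3 p1 p2) T < size T) T < size T) T < size T)%N.

Lemma has_disjoint_transversalsP W : has_disjoint_transversals W ->
  exists p1 p2 p3, [/\ p1 \in transversals W, p2 \in transversals W,
                       p3 \in transversals W & disjoint3 p1 p2 p3].
Proof.
rewrite /has_disjoint_transversals /= -has_find => /hasP [p1 T1].
rewrite -has_find => /hasP [p2 T2]; rewrite -has_find => /hasP [p3 T3 d].
by exists p1, p2, p3.
Qed.

Lemma few_fano_lines_transversals :
  all (fun W => (size W <= 4)%N ==> has_disjoint_transversals W) (sublists fano_lines).
Proof. by vm_compute. Qed.

Lemma filter_sublists (T : eqType) (P : pred T) s : filter P s \in sublists s.
Proof.
elim: s => [|x s IH] //=; rewrite mem_cat.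
by case: (P x); rewrite ?IH ?(map_f (cons x)) ?orbT.
Qed.

Lemma fano_lines_uniq : uniq fano_lines.
Proof. by vm_compute. Qed.

Lemma bit_transversals W : (size W <= 4)%N -> {subset W <= fano_lines} ->
  exists p1 p2 p3, {in W, forall l, [&& meets_once p1 l, meets_once p2 l & meets_once p3 l]}
    /\ disjoint3 p1 p2 p3.
Proof.
move=> W4 W_lines; set W' := [seq l <- fano_lines | l \in W].
have W'W l : l \in W -> l \in W' by move=> lW; rewrite mem_filter lW W_lines.
have /allP/(_ W' (filter_sublists _ _)) := few_fano_lines_transversals.
have -> : (size W' <= 4)%N.
  apply: leq_trans W4; apply: uniq_leq_size; first exact: filter_uniq fano_lines_uniq.
  by move=> l; rewrite mem_filter => /andP [].
rewrite implyTb => /has_disjoint_transversalsP [p1 [p2 [p3 [T1 T2 T3 d]]]].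
exists p1, p2, p3; split=> // l /W'W lW'.
move: T1 T2 T3; rewrite !mem_filter => /andP [/allP T1 _] /andP [/allP T2 _] /andP [/allP T3 _].
by rewrite T1 ?T2 ?T3.
Qed.

Definition fano_line (L : {set Z23}) : Prop :=
  exists a b, [/\ a != 0, b != 0, a != b & L = [set a; b; a + b]].

Lemma bits_of_fano_point x : x != 0 -> bits_of x \in fano_points.
Proof.
rewrite -(inj_eq bits_of_inj) bits_of0.
by case: (bits_of x) => [[[] []] []].
Qed.

Lemma addr_neql (a b : Z23) : b != 0 -> a != a + b.
Proof. by apply: contraNneq => /esym/eqP; rewrite -subr_eq0 addrAC subrr add0r. Qed.

Definition line_bits (L : {set Z23}) : seq bits :=
  nth [::] fano_lines (find (fun l => perm_eq l [seq bits_of x | x <- enum L]) fano_lines).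

Lemma line_bitsP L : fano_line L ->
  line_bits L \in fano_lines /\ perm_eq (line_bits L) [seq bits_of x | x <- enum L].
Proof.
case=> a [b [a0 b0 ab ->]].
have L_perm : perm_eq [:: bits_of a; bits_of b; bxor (bits_of a) (bits_of b)]
                      [seq bits_of x | x <- enum [set a; b; a + b]].
  rewrite -bits_ofD -[[:: _; _; _]]/(map bits_of [:: a; b; a + b]); apply: perm_map.
  apply: uniq_perm; last by move=> x; rewrite mem_enum !inE orbA.
    by rewrite /= !inE negb_or ab !addr_neql // addrC addr_neql.
  exact: enum_uniq.
have /allP/(_ _ (bits_of_fano_point a0))/allP/(_ _ (bits_of_fano_point b0)) := fano_linesP.
rewrite (inj_eq bits_of_inj) ab implyTb => has_l.
rewrite (eq_has (permPr L_perm)) in has_l.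
by split; [rewrite mem_nth // -has_find | exact: (nth_find [::] has_l)].
Qed.

Lemma card_line_bits L (p : seq bits) : fano_line L ->
  #|L :&: [set x | bits_of x \in p]| = count (mem p) (line_bits L).
Proof.
move=> /line_bitsP [_ /permP ->]; rewrite count_map card_setI_sum -big_enum /=.
rewrite -sum1_count [RHS]big_mkcond; apply: eq_bigr => x _; rewrite inE.
by case: ifP => /= ->.
Qed.

Lemma fano_transversals (Ls : seq {set Z23}) :
  (size Ls <= 4)%N -> {in Ls, forall L, fano_line L} ->
  exists P1 P2 P3 : {set Z23},
    {in Ls, forall L, [/\ #|L :&: P1| = 1, #|L :&: P2| = 1 & #|L :&: P3| = 1]%N}
    /\ P1 :&: P2 :&: P3 = set0.
Proof.
move=> Ls4 Ls_lines.
have W_lines : {subset map line_bits Ls <= fano_lines}.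
  by move=> _ /mapP [L LLs ->]; case: (line_bitsP (Ls_lines L LLs)).
have W4 : (size (map line_bits Ls) <= 4)%N by rewrite size_map.
have [p1 [p2 [p3 [p_meet p_disj]]]] := bit_transversals W4 W_lines.
exists [set x | bits_of x \in p1], [set x | bits_of x \in p2], [set x | bits_of x \in p3].
split=> [L LLs | ].
  have := p_meet _ (map_f line_bits LLs); have L_line := Ls_lines L LLs.
  by rewrite !(card_line_bits _ L_line) => /and3P [/eqP -> /eqP -> /eqP ->].
apply/setP => x; rewrite !inE; apply/negP => /andP [/andP [x1 x2] x3].
by move/hasPn/(_ _ x1): p_disj; rewrite x2 x3.
Qed.

End FanoPlane.

Section FourLineFlow.
Local Open Scope ring_scope.

Variables (V E : finType) (g : E -> V * V) (phi : E -> Z23).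
Hypotheses (g_cubic : cubic g) (phi_4 : k_line_fano_flow g 4 phi).

Let phi_flow := proj1 phi_4.

Lemma line_at_fano_line v : fano_line (line_at g phi v).
Proof.
have /card_gt1P [e [f [ev fv ef]]] : (1 < #|inc g v|)%N by rewrite (proj2 g_cubic).
exists (phi e), (phi f); rewrite !(proj1 phi_flow) (line_atE g_cubic phi_flow ev fv ef).
by split=> //; apply: (proj1 (proj2 phi_flow v)).
Qed.

Lemma preim_line_factor (P : {set Z23}) :
  (forall v, #|line_at g phi v :&: P| = 1)%N -> one_factor g (phi @^-1: P).
Proof.
move=> P1 v; rewrite -[RHS](P1 v).
have -> : line_at g phi v :&: P = phi @: (inc g v :&: phi @^-1: P).
  apply/setP => x; rewrite inE; apply/andP/imsetP.
    by case=> /imsetP [e ev ->] eP; exists e; rewrite // in_setI ev inE.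
  by case=> e /setIP [ev]; rewrite inE => eP ->; rewrite imset_f.
rewrite card_in_imset //.
by apply: sub_in2 (fano_flow_inj phi_flow (v := v)) => e /setIP [].
Qed.

Lemma four_line_flow_factors : exists M1 M2 M3 : {set E},
  [/\ one_factor g M1, one_factor g M2, one_factor g M3 & M1 :&: M2 :&: M3 = set0].
Proof.
set Ls := enum [set line_at g phi v | v in V].
have Ls4 : (size Ls <= 4)%N by rewrite -cardE; case: phi_4.
have Ls_lines : {in Ls, forall L, fano_line L}.
  by move=> L; rewrite mem_enum => /imsetP [v _ ->]; apply: line_at_fano_line.
have [P1 [P2 [P3 [P_meet P_disj]]]] := fano_transversals Ls4 Ls_lines.
have Ls_at v : line_at g phi v \in Ls by rewrite mem_enum imset_f.
exists (phi @^-1: P1), (phi @^-1: P2), (phi @^-1: P3).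
split; try by apply: preim_line_factor => v; case: (P_meet _ (Ls_at v)).
by rewrite -!preimsetI P_disj preimset0.
Qed.
End FourLineFlow.

Section Gadget.
Variables (V E : finType) (g : E -> V * V).

Local Notation node e i := (inr (e, @Ordinal 4 i isT)).
Local Notation ord7 k := (@Ordinal 7 k isT).
Local Notation edge e k := (e, ord7 k).

(* The gadget of [e = xy] is K_4 minus the edge between nodes 0 and 3, whose
   node 0 is joined to [x] and node 3 to [y] (edges numbered 0..6 below). *)
Definition gadget (p : E * 'I_7) : (V + E * 'I_4) * (V + E * 'I_4) :=
  let: (e, k) := p in
  match val k with
  | 0 => (inl (g e).1, node e 0)
  | 1 => (node e 0, node e 1)
  | 2 => (node e 0, node e 2)
  | 3 => (node e 1, node e 2)
  | 4 => (node e 1, node e 3)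
  | 5 => (node e 2, node e 3)
  | _ => (node e 3, inl (g e).2)
  end.

Ltac gadget_simpl :=
  rewrite ?inE /= -?sum_eqE /= ?xpair_eqE -?val_eqE /= ?andbT ?andbF ?orbF ?orbb.

Lemma inc_gadget_node0 e : inc gadget (node e 0) = [set edge e 0; edge e 1; edge e 2].
Proof. by apply/setP => -[f [[|[|[|[|[|[|[|k]]]]]]] lt_k]]; gadget_simpl. Qed.

Lemma inc_gadget_node1 e : inc gadget (node e 1) = [set edge e 1; edge e 3; edge e 4].
Proof. by apply/setP => -[f [[|[|[|[|[|[|[|k]]]]]]] lt_k]]; gadget_simpl. Qed.

Lemma inc_gadget_node2 e : inc gadget (node e 2) = [set edge e 2; edge e 3; edge e 5].
Proof. by apply/setP => -[f [[|[|[|[|[|[|[|k]]]]]]] lt_k]]; gadget_simpl. Qed.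

Lemma inc_gadget_node3 e : inc gadget (node e 3) = [set edge e 4; edge e 5; edge e 6].
Proof. by apply/setP => -[f [[|[|[|[|[|[|[|k]]]]]]] lt_k]]; gadget_simpl. Qed.

Lemma gadget_loopless : loopless gadget.
Proof. by case=> e [[|[|[|[|[|[|[|k]]]]]]] lt_k]; gadget_simpl. Qed.

Hypothesis g_cubic : cubic g.
Let g_loopless := proj1 g_cubic.

Definition gadget_port (u : V) (f : E) : E * 'I_7 :=
  if (g f).1 == u then edge f 0 else edge f 6.

Lemma gadget_port_inj u : injective (gadget_port u).
Proof. by move=> f f'; rewrite /gadget_port; do 2!case: ifP => _; case. Qed.

Lemma inc_gadget_outer u : inc gadget (inl u) = gadget_port u @: inc g u.
Proof.
apply/setP => p; apply/idP/imsetP => [| [f fu ->]].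
  case: p => f [[|[|[|[|[|[|[|k]]]]]]] lt_k]; gadget_simpl => // /eqP fu; exists f.
  - by rewrite inE fu eqxx.
  - by rewrite /gadget_port fu eqxx; congr pair; apply: val_inj.
  - by rewrite inE fu eqxx orbT.
  - by rewrite /gadget_port -fu (negbTE (g_loopless f)); congr pair; apply: val_inj.
rewrite /gadget_port; case: ifP => [/eqP f1 | f1]; gadget_simpl; first by rewrite f1.
by move: fu; rewrite inE f1.
Qed.

Lemma gadget_cubic : cubic gadget.
Proof.
split; first exact: gadget_loopless.
case=> [u | [e [[|[|[|[|i]]]] lt_i]]] //; rewrite ?(bool_irrelevance lt_i isT).
- by rewrite inc_gadget_outer card_imset ?(proj2 g_cubic) //; apply: gadget_port_inj.
- by rewrite inc_gadget_node0 cards3 //; gadget_simpl.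
- by rewrite inc_gadget_node1 cards3 //; gadget_simpl.
- by rewrite inc_gadget_node2 cards3 //; gadget_simpl.
- by rewrite inc_gadget_node3 cards3 //; gadget_simpl.
Qed.

Section OneFactorOfGadget.
Variable M : {set E * 'I_7}.
Hypothesis M_factor : one_factor gadget M.

Lemma gadget_factor_counts e :
  [/\ (edge e 0 \in M) + (edge e 1 \in M) + (edge e 2 \in M) = 1,
      (edge e 1 \in M) + (edge e 3 \in M) + (edge e 4 \in M) = 1,
      (edge e 2 \in M) + (edge e 3 \in M) + (edge e 5 \in M) = 1 &
      (edge e 4 \in M) + (edge e 5 \in M) + (edge e 6 \in M) = 1].
Proof.
move: (M_factor (node e 0)) (M_factor (node e 1)) (M_factor (node e 2)) (M_factor (node e 3)).
rewrite inc_gadget_node0 inc_gadget_node1 inc_gadget_node2 inc_gadget_node3 !card_setI_sum.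
by rewrite !big_set3 /= ?addnA //; gadget_simpl.
Qed.

Lemma gadget_factor_ends e : (edge e 0 \in M) = (edge e 6 \in M).
Proof. by have [] := gadget_factor_counts e; do 7!case: (_ \in M). Qed.

Lemma gadget_factor_diamond e : edge e 0 \in M ->
  [/\ (edge e 1 \in M) = false, (edge e 2 \in M) = false, (edge e 3 \in M) = true,
      (edge e 4 \in M) = false & (edge e 5 \in M) = false].
Proof. by have [] := gadget_factor_counts e; do 7!case: (_ \in M). Qed.
End OneFactorOfGadget.

Definition gadget_proj (M : {set E * 'I_7}) : {set E} := [set e | edge e 0 \in M].

Lemma gadget_proj_factor M : one_factor gadget M -> one_factor g (gadget_proj M).
Proof.
move=> M_factor u; rewrite -[RHS](M_factor (inl u)) !card_setI_sum inc_gadget_outer.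
rewrite big_imset /=; last by move=> f f1 _ _ /gadget_port_inj.
apply: eq_bigr => f _; rewrite /gadget_port inE.
by case: ifP => // _; rewrite gadget_factor_ends.
Qed.

Lemma gadget_lift e0 (F : {set E * 'I_7}) x y : (forall f k, f != e0 -> (f, k) \in F) ->
  connect (adjF g (~: [set e0])) x y -> connect (adjF gadget F) (inl x) (inl y).
Proof.
move=> gadgetF; apply: connect_homo => {}x {}y /existsP [f /andP [fe0 xy]].
have {fe0} /gadgetF fF : f != e0 by rewrite !inE in fe0.
have f_step k : connect (adjF gadget F) (gadget (f, k)).1 (gadget (f, k)).2.
  exact: connect_edge.
have f_path : connect (adjF gadget F) (inl (g f).1) (inl (g f).2).
  have s0 : connect (adjF gadget F) (inl (g f).1) (node f 0) := f_step (ord7 0).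
  have s1 : connect (adjF gadget F) (node f 0) (node f 1) := f_step (ord7 1).
  have s4 : connect (adjF gadget F) (node f 1) (node f 3) := f_step (ord7 4).
  have s6 : connect (adjF gadget F) (node f 3) (inl (g f).2) := f_step (ord7 6).
  exact: connect_trans s0 (connect_trans s1 (connect_trans s4 s6)).
by case/orP: xy f_path => /eqP -> //=; rewrite adjF_sym.
Qed.

Lemma gadget_bridgeless : bridgeless g -> bridgeless gadget.
Proof.
move=> g_bridgeless [e k]; apply/negP; rewrite negbK /=.
set R := adjF gadget (~: [set (e, k)]).
have fwd j (lt_j : j < 7) : j != k ->
    connect R (gadget (e, Ordinal lt_j)).1 (gadget (e, Ordinal lt_j)).2.
  move=> jk; apply: connect_edge; rewrite !inE xpair_eqE eqxx /=.
  by apply: contra jk => /eqP <-.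
have bwd j (lt_j : j < 7) : j != k ->
    connect R (gadget (e, Ordinal lt_j)).2 (gadget (e, Ordinal lt_j)).1.
  by rewrite adjF_sym; apply: fwd.
have lift : connect R (inl (g e).1) (inl (g e).2).
  apply: (gadget_lift (e0 := e)) => [f j fe |]; first by rewrite !inE xpair_eqE (negbTE fe).
  by apply/negPn/negP; apply: g_bridgeless.
case: k @R fwd bwd lift => -[|[|[|[|[|[|[|k]]]]]]] lt_k R fwd bwd lift /=.
- apply: connect_trans lift (connect_trans (bwd 6 isT isT) _).
  exact: connect_trans (bwd 4 isT isT) (bwd 1 isT isT).
- exact: connect_trans (fwd 2 isT isT) (bwd 3 isT isT).
- exact: connect_trans (fwd 1 isT isT) (fwd 3 isT isT).
- exact: connect_trans (bwd 1 isT isT) (fwd 2 isT isT).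
- exact: connect_trans (fwd 3 isT isT) (fwd 5 isT isT).
- exact: connect_trans (bwd 3 isT isT) (fwd 4 isT isT).
- apply: connect_trans (bwd 4 isT isT) (connect_trans (bwd 1 isT isT) _).
  exact: connect_trans (bwd 0 isT isT) lift.
- by [].
Qed.

Section ThreeFactorsOfGadget.
Variables M1 M2 M3 : {set E * 'I_7}.
Hypotheses (M1_factor : one_factor gadget M1) (M2_factor : one_factor gadget M2).
Hypotheses (M3_factor : one_factor gadget M3).

Lemma gadget_common_port e :
  e \in gadget_proj M1 :&: gadget_proj M2 :&: gadget_proj M3 ->
  [/\ mult3 M1 M2 M3 (edge e 1) = 0, mult3 M1 M2 M3 (edge e 2) = 0,
      mult3 M1 M2 M3 (edge e 3) = 3, mult3 M1 M2 M3 (edge e 4) = 0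
    & mult3 M1 M2 M3 (edge e 5) = 0].
Proof.
rewrite /mult3 !inE => /andP [/andP [/(gadget_factor_diamond M1_factor) [-> -> -> -> ->]
  /(gadget_factor_diamond M2_factor) [-> -> -> -> ->]]
  /(gadget_factor_diamond M3_factor) [-> -> -> -> ->]].
by [].
Qed.

Lemma gadget_triangle_free_proj : triangle_free gadget (core M1 M2 M3) ->
  gadget_proj M1 :&: gadget_proj M2 :&: gadget_proj M3 = set0.
Proof.
move=> tf; apply/setP => e; rewrite in_set0; apply/negP => /gadget_common_port [m1 m2 m3 _ _].
apply: (tf [:: node e 0; node e 1; node e 2] [:: edge e 1; edge e 3; edge e 2] erefl).
split; split => //=; try by gadget_simpl.
  by rewrite !inE m1 m2 m3.
by rewrite /joins /= !eqxx ?orbT.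
Qed.

Lemma gadget_acyclic_proj : acyclic gadget (E0 M1 M2 M3) ->
  gadget_proj M1 :&: gadget_proj M2 :&: gadget_proj M3 = set0.
Proof.
move=> ac; apply/setP => e; rewrite in_set0; apply/negP => /gadget_common_port [m1 m2 _ m4 m5].
apply: (ac [:: node e 0; node e 1; node e 3; node e 2] [:: edge e 1; edge e 4; edge e 5; edge e 2]).
split; split => //=; try by gadget_simpl.
  by rewrite !inE m1 m2 m4 m5.
by rewrite /joins /= !eqxx ?orbT.
Qed.
End ThreeFactorsOfGadget.
End Gadget.

Theorem theorem3p2 : [<-> stmt1; stmt2; stmt3; stmt4; stmt5].
Proof.
tfae=> H V E g g_cubic g_bridgeless.
- have [phi phi4] := H V E g g_cubic g_bridgeless.
  exact: four_line_flow_factors phi4.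
- have [M1 [M2 [M3 [M1f M2f M3f M0]]]] := H V E g g_cubic g_bridgeless.
  by exists M1, M2, M3; split => //; apply: core_bipartite.
- have [M1 [M2 [M3 [M1f M2f M3f Mb]]]] := H V E g g_cubic g_bridgeless.
  by exists M1, M2, M3; split => //; apply: bipartite_triangle_free.
- have [M1 [M2 [M3 [M1f M2f M3f Mt]]]] :=
    H _ _ _ (gadget_cubic g_cubic) (gadget_bridgeless g_bridgeless).
  have Pf := gadget_proj_factor g_cubic.
  exists (gadget_proj M1), (gadget_proj M2), (gadget_proj M3); split; try exact: Pf.
  apply: (E0_acyclic g_cubic); try exact: Pf.
  exact: gadget_triangle_free_proj Mt.
- have [M1 [M2 [M3 [M1f M2f M3f Ma]]]] :=
    H _ _ _ (gadget_cubic g_cubic) (gadget_bridgeless g_bridgeless).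
  have Pf := gadget_proj_factor g_cubic.
  exists (factor_flow (gadget_proj M1) (gadget_proj M2) (gadget_proj M3)).
  apply: (factor_flow_4lines g_cubic); try exact: Pf.
  exact: gadget_acyclic_proj Ma.
Qed.
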